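(* For every indecomposable instrument $\mathcal{I}\in\mathrm{Ins}(\Omega,\mathcal{H},\mathcal{K})$ there exists a dilation $(\mathcal{H}_A,W,\mathsf{E})$ of $\mathcal{I}$ such that the complementary instrument $\mathcal{I}^C\in\mathrm{Ins}(\Omega,\mathcal{H},\mathcal{H}_A)$ relative to it is the measure-and-prepare instrument $\mathcal{I}^C_x(\varrho)=\mathrm{tr}[\mathsf{A}^{\mathcal{I}}(x)\varrho]\,|\varphi_x\rangle\langle\varphi_x|$ for all $x\in\Omega$ and states $\varrho$, for some orthonormal basis $\{\varphi_x\}_{x\in\Omega}$ of $\mathcal{H}_A$.
   Context: All Hilbert spaces are finite-dimensional and complex, and all outcome sets are finite. A POVM $\mathsf{E}\in\mathcal{O}(\Omega,\mathcal{H})$ is a map $x\mapsto\mathsf{E}(x)$ to positive operators with $\sum_x\mathsf{E}(x)=I$. An instrument $\mathcal{I}\in\mathrm{Ins}(\Omega,\mathcal{H},\mathcal{K})$ is a family $(\mathcal{I}_x)_{x\in\Omega}$ of completely positive trace-nonincreasing linear maps $\mathcal{L}(\mathcal{H})\to\mathcal{L}(\mathcal{K})$ whose sum is trace preserving; its induced POVM is given by $\mathrm{tr}[\mathsf{A}^{\mathcal{I}}(x)\varrho]=\mathrm{tr}[\mathcal{I}_x(\varrho)]$. $\mathcal{I}$ is indecomposable if each nonzero $\mathcal{I}_x$ has Kraus rank 1, i.e. $\mathcal{I}_x(\varrho)=K_x\varrho K_x^*$ for an operator $K_x:\mathcal{H}\to\mathcal{K}$. A dilation of $\mathcal{I}$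 is a triple $(\mathcal{H}_A,W,\mathsf{E})$ with $W:\mathcal{H}\to\mathcal{H}_A\otimes\mathcal{K}$ an isometry and $\mathsf{E}\in\mathcal{O}(\Omega,\mathcal{H}_A)$ such that $\mathcal{I}_x(\varrho)=\mathrm{tr}_{\mathcal{H}_A}[W\varrho W^*(\mathsf{E}(x)\otimes I_{\mathcal{K}})]$; the complementary instrument relative to it is $\mathcal{I}^C_x(\varrho)=\mathrm{tr}_{\mathcal{K}}[(\sqrt{\mathsf{E}(x)}\otimes I_{\mathcal{K}})W\varrho W^*(\sqrt{\mathsf{E}(x)}\otimes I_{\mathcal{K}})]$. An instrument is measure-and-prepare if it has the form $\varrho\mapsto\mathrm{tr}[\mathsf{A}(x)\varrho]\xi_x$ for a POVM $\mathsf{A}$ and states $\xi_x$. *)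

(* Finite-dimensional quantum instruments over a generic
   numeric closed field C (e.g. the complex numbers), with Hilbert spaces
   C^n represented by column vectors 'cV[C]_n and operators by matrices. *)
From HB Require Import structures.
From mathcomp Require Import all_boot all_order all_algebra.
From mathcomp Require Import mxtens.
Set Implicit Arguments. Unset Strict Implicit. Unset Printing Implicit Defensive.
Import Order.TTheory GRing.Theory Num.Theory.
Local Open Scope ring_scope.

Section Quantum.
Variable C : numClosedFieldType.

Definition dag {m n : nat} (A : 'M[C]_(m, n)) : 'M[C]_(n, m) :=
  \matrix_(i, j) (A j i)^*.

Definition psd {n : nat} (A : 'M[C]_n) : Prop :=
  forall v : 'cV[C]_n, 0 <= (dag v *m A *m v) 0 0.

Definition state {n : nat} (rho : 'M[C]_n) : Prop := psd rho /\ \tr rho = 1.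

Definition povm (T : finType) {n : nat} (E : T -> 'M[C]_n) : Prop :=
  (forall x, psd (E x)) /\ \sum_(x : T) E x = 1%:M.

Definition linmap {n m : nat} (Phi : 'M[C]_n -> 'M[C]_m) : Prop :=
  forall (a : C) (X Y : 'M[C]_n), Phi (a *: X + Y) = a *: Phi X + Phi Y.

Definition blk {k n : nat} (X : 'M[C]_(k * n)) (i j : 'I_k) : 'M[C]_n :=
  \matrix_(p, q) X (mxtens_index (i, p)) (mxtens_index (j, q)).

(* id_k (x) Phi *)
Definition ampl {k n m : nat} (Phi : 'M[C]_n -> 'M[C]_m) (X : 'M[C]_(k * n))
  : 'M[C]_(k * m) :=
  \matrix_(r, s) Phi (blk X (mxtens_unindex r).1 (mxtens_unindex s).1)
                     (mxtens_unindex r).2 (mxtens_unindex s).2.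

Definition cp {n m : nat} (Phi : 'M[C]_n -> 'M[C]_m) : Prop :=
  forall (k : nat) (X : 'M[C]_(k * n)), psd X -> psd (ampl Phi X).

Definition trace_nonincr {n m : nat} (Phi : 'M[C]_n -> 'M[C]_m) : Prop :=
  forall rho : 'M[C]_n, psd rho -> \tr (Phi rho) <= \tr rho.

Definition instrument (T : finType) {n m : nat}
  (I : T -> 'M[C]_n -> 'M[C]_m) : Prop :=
  (forall x, [/\ linmap (I x), cp (I x) & trace_nonincr (I x)]) /\
  (forall rho : 'M[C]_n, \tr (\sum_(x : T) I x rho) = \tr rho).

Definition induced_povm (T : finType) {n m : nat}
  (I : T -> 'M[C]_n -> 'M[C]_m) (A : T -> 'M[C]_n) : Prop :=
  forall x (rho : 'M[C]_n), \tr (A x *m rho) = \tr (I x rho).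

Definition indecomposable (T : finType) {n m : nat}
  (I : T -> 'M[C]_n -> 'M[C]_m) : Prop :=
  forall x, (exists rho, I x rho <> 0) ->
    exists K : 'M[C]_(m, n), forall rho, I x rho = K *m rho *m dag K.

(* partial traces on C^a (x) C^m *)
Definition ptrA {a m : nat} (X : 'M[C]_(a * m)) : 'M[C]_m :=
  \matrix_(p, q) \sum_(i < a) X (mxtens_index (i, p)) (mxtens_index (i, q)).
Definition ptrK {a m : nat} (X : 'M[C]_(a * m)) : 'M[C]_a :=
  \matrix_(i, j) \sum_(p < m) X (mxtens_index (i, p)) (mxtens_index (j, p)).

Definition isometry {n k : nat} (W : 'M[C]_(k, n)) : Prop :=
  dag W *m W = 1%:M.

Definition dilation (T : finType) {n m a : nat}
  (I : T -> 'M[C]_n -> 'M[C]_m) (W : 'M[C]_(a * m, n)) (E : T -> 'M[C]_a)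
  : Prop :=
  [/\ isometry W, povm E &
      forall x (rho : 'M[C]_n),
        I x rho = ptrA (W *m rho *m dag W *m (E x *t (1%:M : 'M[C]_m)))].

Definition psd_sqrt {a : nat} (S P : 'M[C]_a) : Prop := psd S /\ S *m S = P.

Definition compl_map {n m a : nat} (W : 'M[C]_(a * m, n)) (S : 'M[C]_a)
  (rho : 'M[C]_n) : 'M[C]_a :=
  ptrK ((S *t (1%:M : 'M[C]_m)) *m W *m rho *m dag W
        *m (S *t (1%:M : 'M[C]_m))).

Definition onb (T : finType) {a : nat} (phi : T -> 'cV[C]_a) : Prop :=
  (forall x y, dag (phi x) *m phi y = (x == y)%:R%:M) /\
  \sum_(x : T) phi x *m dag (phi x) = 1%:M.

End Quantum.

From HB Require Import structures.
From mathcomp Require Import all_boot all_order all_algebra.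
From mathcomp Require Import mxtens ring.
From Stdlib Require Import Classical.
Import Order.TTheory GRing.Theory Num.Theory.
Local Open Scope ring_scope.
Set Implicit Arguments. Unset Strict Implicit. Unset Printing Implicit Defensive.

(* Write I_x(rho) = K_x rho K_x^* (with K_x = 0 when I_x vanishes) and stack
   the Kraus operators into W = sum_x e_x (x) K_x.  Trace preservation gives
   sum_x K_x^* K_x = 1, so W is an isometry, and with the sharp POVM
   E(x) = |e_x><e_x| the triple (C^Omega, W, E) dilates I.  The only positive
   square root of the rank-one projection E(x) is E(x) itself, so the
   complementary instrument keeps the (x, x) block K_x rho K_x^* of W rho W^*
   and returns its trace, tr[A(x) rho], times |e_x><e_x|. *)

Section Operators.
Variable C : numClosedFieldType.

Lemma dagK m n (A : 'M[C]_(m, n)) : dag (dag A) = A.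
Proof. by apply/matrixP => i j; rewrite !mxE conjCK. Qed.

Lemma dag_mul m n p (A : 'M[C]_(m, n)) (B : 'M[C]_(n, p)) :
  dag (A *m B) = dag B *m dag A.
Proof.
apply/matrixP => i j; rewrite !mxE rmorph_sum; apply: eq_bigr => k _.
by rewrite !mxE rmorphM mulrC.
Qed.

Lemma dag_delta_col n (i : 'I_n) : dag (delta_mx i 0 : 'cV[C]_n) = delta_mx 0 i.
Proof. by apply/matrixP => a b; rewrite !mxE rmorph_nat andbC. Qed.

Lemma delta_col_proj n (i : 'I_n) :
  (delta_mx i 0 : 'cV[C]_n) *m dag (delta_mx i 0) = delta_mx i i.
Proof. by rewrite dag_delta_col mul_delta_mx. Qed.

Lemma mul_mx_dag_diag_ge0 m n (X : 'M[C]_(m, n)) i : 0 <= (X *m dag X) i i.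
Proof. by rewrite mxE sumr_ge0 // => k _; rewrite mxE mul_conjC_ge0. Qed.

Lemma quad_form_delta n (S : 'M[C]_n) j k :
  dag (delta_mx j 0 : 'cV[C]_n) *m S *m delta_mx k 0 = (S j k)%:M.
Proof.
rewrite dag_delta_col -rowE -colE; apply/matrixP => a b.
by rewrite !ord1 !mxE mulr1n.
Qed.

Lemma quad_form_delta_add n (S : 'M[C]_n) j k c
  (v := delta_mx j 0 + c *: delta_mx k 0 : 'cV[C]_n) :
  (dag v *m S *m v) 0 0 = S j j + c * S j k + c^* * S k j + c^* * c * S k k.
Proof.
have dagZ (u : 'cV[C]_n) : dag (c *: u) = c^* *: dag u.
  by apply/matrixP => a b; rewrite !mxE rmorphM.
have dagD (u w : 'cV[C]_n) : dag (u + w) = dag u + dag w.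
  by apply/matrixP => a b; rewrite !mxE rmorphD.
rewrite /v dagD dagZ !mulmxDl !mulmxDr -!scalemxAl -!scalemxAr !quad_form_delta.
by rewrite !scale_scalar_mx -!raddfD /= mxE mulr1n; ring.
Qed.

Lemma psd_diag_ge0 n (S : 'M[C]_n) j : psd S -> 0 <= S j j.
Proof. by move/(_ (delta_mx j 0)); rewrite quad_form_delta mxE mulr1n. Qed.

(* Polarization: the quadratic form of [S] is real at [e_k + e_j] and [e_k + 'i e_j]. *)
Lemma dag_psd n (S : 'M[C]_n) : psd S -> dag S = S.
Proof.
move=> hS; apply/matrixP => j k; rewrite mxE.
have real_form c : let q := S k k + c * S k j + c^* * S j k + c^* * c * S j j in q^* = q.
  by rewrite /= -quad_form_delta_add conj_Creal // ger0_real.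
have [rj rk] := (conj_Creal (ger0_real (psd_diag_ge0 j hS)),
                 conj_Creal (ger0_real (psd_diag_ge0 k hS))).
have := real_form 1; have := real_form 'i.
rewrite /= !rmorphD !rmorphM /= !conjCK conjCi rmorph1 rj rk !mul1r.
set a := S k j; set b := S j k => ei e1.
have : 'i *+ 2 * (a^* - b) =
    'i * ((S k k + a^* + b^* + S j j) - (S k k + a + b + S j j)) -
    ((S k k + - 'i * a^* + 'i * b^* + 'i * - 'i * S j j) -
     (S k k + 'i * a + - 'i * b + - 'i * 'i * S j j)) by ring.
rewrite e1 ei !subrr mulr0 subr0 => /eqP.
by rewrite mulf_eq0 mulrn_eq0 (negPf (neq0Ci C)) subr_eq0 => /eqP.
Qed.

Lemma psd_rank1 n (v : 'cV[C]_n) : psd (v *m dag v).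
Proof.
move=> w; have -> : dag w *m (v *m dag v) *m w = (dag w *m v) *m dag (dag w *m v).
  by rewrite dag_mul dagK !mulmxA.
exact: mul_mx_dag_diag_ge0.
Qed.

Lemma psd_sqrt_delta n (S : 'M[C]_n) k :
  psd S -> S *m S = delta_mx k k -> S = delta_mx k k.
Proof.
move=> hS hSS.
have row0 j c : j != k -> S j c = 0.
  move=> hjk; have : (S *m dag S) j j = 0 by rewrite dag_psd // hSS mxE (negPf hjk).
  rewrite mxE => /psumr_eq0P sum0.
  have /eqP : S j c * (dag S) c j = 0 by apply: sum0 => // c' _; rewrite mxE mul_conjC_ge0.
  by rewrite mxE mul_conjC_eq0 => /eqP.
have col0 j c : j != k -> S c j = 0.
  by move=> hjk; rewrite -(dag_psd hS) mxE row0 ?conjC0.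
have Skk : S k k = 1.
  have : (S *m S) k k = 1 by rewrite hSS mxE !eqxx.
  rewrite mxE (bigD1 k) //= big1 ?addr0; last by move=> c hc; rewrite (row0 c k hc) mulr0.
  rewrite -expr2 => /eqP; rewrite sqrf_eq1 => /orP[/eqP // | /eqP Skk].
  by have := psd_diag_ge0 k hS; rewrite Skk ler0N1.
apply/matrixP => i j; rewrite mxE.
have [-> | hik] := eqVneq i k; last by rewrite row0.
by have [-> | hjk] := eqVneq j k; [rewrite Skk | rewrite col0 // andbF].
Qed.

Lemma tr_mul_delta n (M : 'M[C]_n) i j : \tr (M *m delta_mx j i) = M i j.
Proof.
rewrite /mxtrace (bigD1 i) //= big1 ?addr0 => [|c hc].
  rewrite mxE (bigD1 j) //= big1 ?addr0 => [|c hc]; first by rewrite mxE !eqxx mulr1.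
  by rewrite mxE (negPf hc) mulr0.
by rewrite mxE big1 // => d _; rewrite mxE (negPf hc) andbF mulr0.
Qed.

Lemma eq_mx_trace_mul n (M N : 'M[C]_n) :
  (forall rho, \tr (M *m rho) = \tr (N *m rho)) -> M = N.
Proof. by move=> h; apply/matrixP => i j; rewrite -!tr_mul_delta h. Qed.

End Operators.

Section PartialTrace.
Variables (C : numClosedFieldType) (a m : nat).
Local Notation proj k := (delta_mx k k *t (1%:M : 'M[C]_m)).

Lemma sum_mxtens (F : 'I_(a * m) -> C) :
  \sum_r F r = \sum_(i < a) \sum_(p < m) F (mxtens_index (i, p)).
Proof.
rewrite pair_big /= (reindex (@mxtens_index a m)) /=; first by apply: eq_bigr => -[].
by exists (@mxtens_unindex a m) => ? _; rewrite ?mxtens_indexK ?mxtens_unindexK.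
Qed.

Lemma mul_mx_proj_tensE (X : 'M[C]_(a * m)) k r i q :
  (X *m proj k) r (mxtens_index (i, q)) = (i == k)%:R * X r (mxtens_index (k, q)).
Proof.
rewrite mxE sum_mxtens (bigD1 k) //= [X in _ + X]big1 ?addr0 => [|j hj].
  rewrite (bigD1 q) //= [X in _ + X]big1 ?addr0 => [|p hp].
    by rewrite tensmxE !mxE !eqxx /= mulr1 mulrC.
  by rewrite tensmxE !mxE (negPf hp) mulr0n !mulr0.
by apply: big1 => p _; rewrite tensmxE !mxE (negPf hj) /= mul0r mulr0.
Qed.

Lemma mul_proj_tens_mxE (X : 'M[C]_(a * m)) k s i p :
  (proj k *m X) (mxtens_index (i, p)) s = (i == k)%:R * X (mxtens_index (k, p)) s.
Proof.
rewrite mxE sum_mxtens (bigD1 k) //= [X in _ + X]big1 ?addr0 => [|j hj].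
  rewrite (bigD1 p) //= [X in _ + X]big1 ?addr0 => [|q hq].
    by rewrite tensmxE !mxE !eqxx /= andbT mulr1.
  by rewrite tensmxE !mxE (eq_sym p) (negPf hq) mulr0 mul0r.
by apply: big1 => q _; rewrite tensmxE !mxE (negPf hj) /= andbF !mul0r.
Qed.

Lemma ptrA_mul_proj_tens (X : 'M[C]_(a * m)) k : ptrA (X *m proj k) = blk X k k.
Proof.
apply/matrixP => p q; rewrite !mxE (bigD1 k) //= big1 ?addr0 => [|i hi].
  by rewrite mul_mx_proj_tensE eqxx mul1r.
by rewrite mul_mx_proj_tensE (negPf hi) mul0r.
Qed.

Lemma ptrK_proj_tens_conj (X : 'M[C]_(a * m)) k :
  ptrK (proj k *m X *m proj k) = \tr (blk X k k) *: delta_mx k k.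
Proof.
apply/matrixP => i j; rewrite !mxE /mxtrace mulr_suml; apply: eq_bigr => p _.
rewrite mul_mx_proj_tensE mul_proj_tens_mxE !mxE.
by case: (i == k); case: (j == k); rewrite /= ?mul1r ?mulr1 ?mul0r ?mulr0.
Qed.

End PartialTrace.

Section KrausStack.
Variables (C : numClosedFieldType) (a m n : nat) (K : 'I_a -> 'M[C]_(m, n)).

Definition kraus_stack : 'M[C]_(a * m, n) :=
  \matrix_(r, q) K (mxtens_unindex r).1 (mxtens_unindex r).2 q.

Lemma kraus_stackE i p q : kraus_stack (mxtens_index (i, p)) q = K i p q.
Proof. by rewrite mxE mxtens_indexK. Qed.

Lemma kraus_stack_gram :
  dag kraus_stack *m kraus_stack = \sum_i dag (K i) *m K i.
Proof.
apply/matrixP => q q'; rewrite !mxE summxE sum_mxtens; apply: eq_bigr => i _.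
by rewrite mxE; apply: eq_bigr => p _; rewrite !mxE !mxtens_indexK.
Qed.

Lemma blk_kraus_stack_conj rho i j :
  blk (kraus_stack *m rho *m dag kraus_stack) i j = K i *m rho *m dag (K j).
Proof.
apply/matrixP => p q; rewrite !mxE; apply: eq_bigr => t _.
rewrite !mxE mxtens_indexK; congr (_ * _); apply: eq_bigr => u _.
by rewrite kraus_stackE.
Qed.

End KrausStack.

Section Instruments.
Variables (C : numClosedFieldType) (T : finType).

Lemma indecomposable_kraus n m (I : T -> 'M[C]_n -> 'M[C]_m) :
  indecomposable I ->
  exists K : T -> 'M[C]_(m, n), forall x rho, I x rho = K x *m rho *m dag (K x).
Proof.
move=> hI; apply: (fin_all_exists (P := fun x (K : 'M[C]_(m, n)) =>
  forall rho, I x rho = K *m rho *m dag K)) => x.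
have [/hI // | I0] := classic (exists rho, I x rho <> 0).
by exists 0 => rho; rewrite !mul0mx; apply: NNPP => hne; apply: I0; exists rho.
Qed.

Lemma trace_preserving_kraus_sum n m (K : T -> 'M[C]_(m, n)) :
  (forall rho, \tr (\sum_x K x *m rho *m dag (K x)) = \tr rho) ->
  \sum_x dag (K x) *m K x = 1%:M.
Proof.
move=> htp; apply: eq_mx_trace_mul => rho.
rewrite mul1mx -(htp rho) mulmx_suml !raddf_sum /=; apply: eq_bigr => x _.
by rewrite -mulmxA mxtrace_mulC.
Qed.

Lemma onb_enum_rank : onb (fun x : T => delta_mx (enum_rank x) 0 : 'cV[C]_#|T|).
Proof.
split=> [x y | ].
  rewrite dag_delta_col mul_delta_mx_cond (can_eq enum_rankK).
  by case: (x == y); apply/matrixP => i j; rewrite !ord1 !mxE.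
rewrite scalar_mx_sum_delta (reindex enum_rank) /=; last exact: onW_bij _ (enum_rank_bij T).
by apply: eq_bigr => x _; rewrite delta_col_proj scale1r.
Qed.

Lemma onb_povm a (phi : T -> 'cV[C]_a) :
  onb phi -> povm (fun x => phi x *m dag (phi x)).
Proof. by case=> _ sum1; split=> // x; apply: psd_rank1. Qed.

End Instruments.

Theorem lemma1 (C : numClosedFieldType) (T : finType) (n m : nat)
  (I : T -> 'M[C]_n -> 'M[C]_m) (A : T -> 'M[C]_n) :
  instrument I -> indecomposable I -> induced_povm I A ->
  exists (a : nat) (W : 'M[C]_(a * m, n)) (E : T -> 'M[C]_a),
    dilation I W E /\
    exists phi : T -> 'cV[C]_a,
      onb phi /\
      forall x : T,
        (exists S, psd_sqrt S (E x)) /\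
        forall S : 'M[C]_a, psd_sqrt S (E x) ->
          forall rho : 'M[C]_n, state rho ->
            compl_map W S rho = \tr (A x *m rho) *: (phi x *m dag (phi x)).
Proof.
move=> [_ htp] /indecomposable_kraus [K hK] hA.
pose phi x := delta_mx (enum_rank x) 0 : 'cV[C]_#|T|.
pose E x := phi x *m dag (phi x).
have E_delta x : E x = delta_mx (enum_rank x) (enum_rank x) by apply: delta_col_proj.
pose W : 'M[C]_(#|T| * m, n) := kraus_stack (fun i => K (enum_val i)).
have W_isometry : dag W *m W = 1%:M.
  rewrite kraus_stack_gram -(trace_preserving_kraus_sum (K := K)); last first.
    by move=> rho; rewrite -htp; congr (\tr _); apply: eq_bigr => x _; rewrite hK.
  rewrite (reindex enum_rank) /=; last exact: onW_bij _ (enum_rank_bij T).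
  by apply: eq_bigr => x _; rewrite enum_rankK.
have povmE : povm E := onb_povm (onb_enum_rank C T).
exists #|T|, W, E; split; [split => // | exists phi; split; first exact: onb_enum_rank].
  by move=> x rho; rewrite E_delta ptrA_mul_proj_tens blk_kraus_stack_conj /= enum_rankK hK.
move=> x; split=> [|S [hS]].
  by exists (E x); split; [exact: povmE.1 | rewrite E_delta mul_delta_mx].
rewrite E_delta => /(psd_sqrt_delta hS) -> rho _.
rewrite /compl_map; set P := delta_mx _ _ *t _.
have -> : P *m W *m rho *m dag W = P *m (W *m rho *m dag W) by rewrite !mulmxA.
rewrite ptrK_proj_tens_conj blk_kraus_stack_conj enum_rankK -hK -hA.
by rewrite delta_col_proj.
Qed.
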